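(* Let $G$ be a group and $s,t\in G$, $s\ne t$, such that $\Gamma=\Phi(G,\{s,t\})$ is a simple graph. If $t$ has order $2$, then $\Gamma$ is an incidence graph, i.e. there is a multigraph $\Gamma'$ with $\Gamma\cong I\Gamma'$.
   Context: $\Phi(G,\{s,t\})$ is the multigraph with vertex set $V_s\cup V_t$, $V_s=\{\langle s\rangle x: x\in G\}$, $V_t=\{\langle t\rangle y : y\in G\}$ (right cosets), with one edge labeled $g$ between $\langle s\rangle x$ and $\langle t\rangle y$ for each $g\in\langle s\rangle x\cap\langle t\rangle y$, and no other edges. A simple graph has no loops and no parallel edges. For a multigraph $\Gamma'=(V',E',\psi')$ (loops and parallel edges allowed), the incidence graph $I\Gamma'$ is the simple graph with vertex set $V'\cup E'$ in which each $a\in E'$ is adjacent exactly to its end-points. *)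

From Stdlib Require Import ZArith.

Record Group := {
  gcar :> Type;
  gmul : gcar -> gcar -> gcar;
  gone : gcar;
  ginv : gcar -> gcar;
  gmulA : forall x y z, gmul x (gmul y z) = gmul (gmul x y) z;
  gmul1 : forall x, gmul gone x = x;
  gmulV : forall x, gmul (ginv x) x = gone
}.

Arguments gmul {g} _ _.
Arguments gone {g}.
Arguments ginv {g} _.

Fixpoint gpown {G : Group} (x : G) (n : nat) : G :=
  match n with O => gone | S m => gmul x (gpown x m) end.

Definition gpowz {G : Group} (x : G) (k : Z) : G :=
  match k with
  | Z0 => gone
  | Zpos p => gpown x (Pos.to_nat p)
  | Zneg p => ginv (gpown x (Pos.to_nat p))
  end.

Definition has_order2 {G : Group} (t : G) : Prop :=
  t <> gone /\ gmul t t = gone.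

Definition rcoset {G : Group} (s x : G) : G -> Prop :=
  fun g => exists k : Z, g = gmul (gpowz s k) x.

(** Multigraphs: loops and parallel edges allowed; psi gives the two
    end-points of an edge (order irrelevant). *)
Record multigraph := {
  mV : Type;
  mE : Type;
  mpsi : mE -> mV * mV
}.

Definition same_ends {V : Type} (p q : V * V) : Prop :=
  p = q \/ p = (snd q, fst q).

Definition is_simple (M : multigraph) : Prop :=
  (forall e : mE M, fst (mpsi M e) <> snd (mpsi M e)) /\
  (forall e1 e2 : mE M, same_ends (mpsi M e1) (mpsi M e2) -> e1 = e2).

Definition madj (M : multigraph) (u v : mV M) : Prop :=
  exists e : mE M, same_ends (mpsi M e) (u, v).

Definition inc_adj (M : multigraph) (x y : mV M + mE M) : Prop :=
  match x, y with
  | inl v, inr a | inr a, inl v => v = fst (mpsi M a) \/ v = snd (mpsi M a)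
  | _, _ => False
  end.

Definition graph_iso {V1 V2 : Type} (adj1 : V1 -> V1 -> Prop)
  (adj2 : V2 -> V2 -> Prop) : Prop :=
  exists (f : V1 -> V2) (g : V2 -> V1),
    (forall x, g (f x) = x) /\ (forall y, f (g y) = y) /\
    (forall u v, adj1 u v <-> adj2 (f u) (f v)).

Definition Vs {G : Group} (s : G) : Type :=
  { C : G -> Prop | exists x : G, C = rcoset s x }.

Definition Phi_edge {G : Group} (s t : G) : Type :=
  { q : Vs s * Vs t * G |
      proj1_sig (fst (fst q)) (snd q) /\ proj1_sig (snd (fst q)) (snd q) }.

Definition Phi {G : Group} (s t : G) : multigraph :=
  {| mV := (Vs s + Vs t)%type;
     mE := Phi_edge s t;
     mpsi := fun e => (inl (fst (fst (proj1_sig e))),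
                       inr (snd (fst (proj1_sig e)))) |}.

(* When t is an
   involution, a coset <t>y = {y, ty} meets exactly the s-cosets <s>y and
   <s>ty, so every vertex of V_t has exactly these two neighbours (counted
   once if they coincide).  Hence Phi(G,{s,t}) is the incidence graph of the
   multigraph with vertex set V_s in which each D in V_t is an edge joining
   <s>y and <s>ty; the isomorphism is the identity on V_s + V_t. *)
From Stdlib Require Import ZArith Lia ProofIrrelevance FunctionalExtensionality
  PropExtensionality ClassicalEpsilon.

Arguments gmulA {g}.
Arguments gmul1 {g}.
Arguments gmulV {g}.

Section GroupFacts.
Variable G : Group.
Implicit Types x y s t : G.

Lemma gmulVr x : gmul x (ginv x) = gone.
Proof.
  rewrite <- (gmul1 (gmul x (ginv x))), <- (gmulV (ginv x)) at 1.
  rewrite <- gmulA, (gmulA (ginv x) x (ginv x)), gmulV, gmul1.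
  apply gmulV.
Qed.

Lemma gmulr1 x : gmul x gone = x.
Proof. rewrite <- (gmulV x), gmulA, gmulVr, gmul1. reflexivity. Qed.

Lemma ginv_mul x y : ginv (gmul x y) = gmul (ginv y) (ginv x).
Proof.
  assert (Hright : gmul (gmul x y) (gmul (ginv y) (ginv x)) = gone).
  { rewrite <- gmulA, (gmulA y), gmulVr, gmul1, gmulVr. reflexivity. }
  rewrite <- (gmulr1 (ginv (gmul x y))), <- Hright, gmulA, gmulV, gmul1.
  reflexivity.
Qed.

Lemma ginv_involution t : gmul t t = gone -> ginv t = t.
Proof. intros Ht. rewrite <- (gmulr1 (ginv t)), <- Ht, gmulA, gmulV, gmul1. reflexivity. Qed.

Lemma gpown_succ_r s n : gpown s (S n) = gmul (gpown s n) s.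
Proof.
  induction n as [|n IH].
  - simpl. rewrite gmulr1, gmul1. reflexivity.
  - change (gpown s (S (S n))) with (gmul s (gpown s (S n))).
    rewrite IH at 1. rewrite gmulA. reflexivity.
Qed.

Lemma gpowz_succ s k : gpowz s (Z.succ k) = gmul s (gpowz s k).
Proof.
  destruct k as [|p|p].
  - simpl. rewrite gmulr1. reflexivity.
  - replace (Z.succ (Zpos p)) with (Zpos (Pos.succ p)) by lia.
    unfold gpowz. rewrite Pos2Nat.inj_succ. reflexivity.
  - destruct (Pos.succ_pred_or p) as [-> | <-].
    + simpl. rewrite gmulr1, gmulVr. reflexivity.
    + replace (Z.succ (Zneg (Pos.succ (Pos.pred p)))) with (Zneg (Pos.pred p)) by lia.
      unfold gpowz.
      rewrite Pos2Nat.inj_succ, gpown_succ_r, ginv_mul, gmulA, gmulVr, gmul1.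
      reflexivity.
Qed.

Lemma gpowz_pred s k : gpowz s (Z.pred k) = gmul (ginv s) (gpowz s k).
Proof.
  rewrite <- (Z.succ_pred k) at 2.
  rewrite gpowz_succ, gmulA, gmulV, gmul1. reflexivity.
Qed.

Lemma gpowz_add s a b : gpowz s (a + b) = gmul (gpowz s a) (gpowz s b).
Proof.
  induction a as [|a IH|a IH] using Z.peano_ind.
  - simpl. rewrite gmul1. reflexivity.
  - rewrite Z.add_succ_l, !gpowz_succ, IH, gmulA. reflexivity.
  - rewrite Z.add_pred_l, !gpowz_pred, IH, gmulA. reflexivity.
Qed.

Lemma gpowz_involution t : gmul t t = gone ->
  forall k, gpowz t k = gone \/ gpowz t k = t.
Proof.
  intros Ht k.
  induction k as [|k IH|k IH] using Z.peano_ind.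
  - left. reflexivity.
  - rewrite gpowz_succ.
    destruct IH as [-> | ->]; [right; apply gmulr1 | left; exact Ht].
  - rewrite gpowz_pred, ginv_involution by exact Ht.
    destruct IH as [-> | ->]; [right; apply gmulr1 | left; exact Ht].
Qed.

Lemma rcoset_self s x : rcoset s x x.
Proof. exists 0%Z. simpl. rewrite gmul1. reflexivity. Qed.

Lemma rcoset_mul_l s x : rcoset s x (gmul s x).
Proof. exists 1%Z. simpl. rewrite gmulr1. reflexivity. Qed.

Lemma rcoset_eq_of_mem s x y : rcoset s x y -> rcoset s x = rcoset s y.
Proof.
  intros [k ->]. apply functional_extensionality; intro h.
  apply propositional_extensionality; split; intros [m ->].
  - exists (m - k)%Z. rewrite gmulA, <- gpowz_add. do 2 f_equal. lia.
  - exists (m + k)%Z. rewrite gmulA, <- gpowz_add. reflexivity.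
Qed.

End GroupFacts.

Definition coset {G : Group} (s x : G) : Vs s :=
  exist _ (rcoset s x) (ex_intro _ x eq_refl).

Lemma Vs_eq {G : Group} (s : G) (C D : Vs s) : proj1_sig C = proj1_sig D -> C = D.
Proof.
  destruct C as [P HP], D as [Q HQ]; simpl; intros ->.
  f_equal. apply proof_irrelevance.
Qed.

Lemma coset_of_mem {G : Group} (s : G) (C : Vs s) x : proj1_sig C x -> C = coset s x.
Proof.
  intros Hx. apply Vs_eq. destruct C as [P [y ->]]. simpl in *.
  apply rcoset_eq_of_mem. exact Hx.
Qed.

Definition coset_rep {G : Group} (t : G) (D : Vs t) : G :=
  proj1_sig (constructive_indefinite_description _ (proj2_sig D)).

Lemma coset_repE {G : Group} (t : G) (D : Vs t) : proj1_sig D = rcoset t (coset_rep t D).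
Proof. unfold coset_rep. destruct constructive_indefinite_description; simpl; auto. Qed.

Definition cosets_meet {G : Group} {s t : G} (C : Vs s) (D : Vs t) : Prop :=
  exists g, proj1_sig C g /\ proj1_sig D g.

Lemma madj_Phi {G : Group} (s t : G) (u v : Vs s + Vs t) :
  madj (Phi s t) u v <->
  match u, v with
  | inl C, inr D | inr D, inl C => cosets_meet C D
  | _, _ => False
  end.
Proof.
  unfold madj, same_ends.
  destruct u as [C|D], v as [C'|D']; simpl;
    split; try tauto; try (intros [e [He|He]]; discriminate He).
  - intros [[[[c d] g] [Hc Hd]] [He|He]]; simpl in *; [|discriminate He].
    injection He as -> ->. exists g. split; assumption.
  - intros [g [Hc Hd]]. exists (exist _ (C, D', g) (conj Hc Hd)). left. reflexivity.
  - intros [[[[c d] g] [Hc Hd]] [He|He]]; simpl in *; [discriminate He|].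
    injection He as -> ->. exists g. split; assumption.
  - intros [g [Hc Hd]]. exists (exist _ (C', D, g) (conj Hc Hd)). right. reflexivity.
Qed.

Definition Phi_contraction {G : Group} (s t : G) : multigraph :=
  {| mV := Vs s; mE := Vs t;
     mpsi := fun D => (coset s (coset_rep t D), coset s (gmul t (coset_rep t D))) |}.

Lemma cosets_meet_involution {G : Group} (s t : G) (C : Vs s) (D : Vs t) :
  gmul t t = gone ->
  cosets_meet C D <->
  C = coset s (coset_rep t D) \/ C = coset s (gmul t (coset_rep t D)).
Proof.
  intros Ht. pose proof (coset_repE t D) as HD. set (y := coset_rep t D) in *.
  unfold cosets_meet. rewrite HD. split.
  - intros [g [Hg [k ->]]].
    destruct (gpowz_involution G t Ht k) as [Hk|Hk]; rewrite Hk in Hg.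
    + left. apply coset_of_mem. rewrite gmul1 in Hg. exact Hg.
    + right. apply coset_of_mem. exact Hg.
  - intros [-> | ->].
    + exists y. split; apply rcoset_self.
    + exists (gmul t y). split; [apply rcoset_self | apply rcoset_mul_l].
Qed.

Lemma graph_iso_id {V : Type} (adj1 adj2 : V -> V -> Prop) :
  (forall u v, adj1 u v <-> adj2 u v) -> graph_iso adj1 adj2.
Proof.
  intros Hadj. exists (fun x => x), (fun x => x).
  split; [reflexivity | split; [reflexivity | exact Hadj]].
Qed.

Theorem proposition8 (G : Group) (s t : G) :
  s <> t ->
  is_simple (Phi s t) ->
  has_order2 t ->
  exists M' : multigraph, graph_iso (madj (Phi s t)) (inc_adj M').
Proof.
  intros _ _ [_ Ht].
  exists (Phi_contraction s t). apply graph_iso_id.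
  intros [C|D] [C'|D']; rewrite madj_Phi; simpl; try tauto;
    apply cosets_meet_involution; exact Ht.
Qed.
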